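(* For any diagonal section $\delta$ and all $x,y\in[0,1]$, $$\overline{C}_\delta(x,y)=\min\left\{x,\;y,\;\max\{x,y\}-\frac12\left(\widehat{\delta}(x)+\widehat{\delta}(y)+\mathrm{TV}_{\min\{x,y\}}^{\max\{x,y\}}(\widehat{\delta})\right)\right\}.$$
   Context: $\mathbb{I}=[0,1]$. A (bivariate) copula is a function $C\colon\mathbb{I}^2\to\mathbb{I}$ with $C(x,0)=C(0,y)=0$, $C(x,1)=x$, $C(1,y)=y$ for all $x,y$, and $C(b,d)+C(a,c)-C(b,c)-C(a,d)\ge 0$ for all $a\le b$, $c\le d$. A diagonal section is a function $\delta\colon\mathbb{I}\to\mathbb{I}$ with $\delta(x)\le x$ for all $x$, $0\le\delta(y)-\delta(x)\le 2(y-x)$ whenever $x\le y$, and $\delta(1)=1$. Write $\widehat{\delta}(x)=x-\delta(x)$, and $\mathrm{TV}_x^y(f)$ for the total variation of $f$ on $[x,y]$ ($x\le y$). Define $\overline{C}_\delta(x,y)=\sup\{C(x,y): C \text{ a copula with } C(t,t)=\delta(t)\ \forall t\in\mathbb{I}\}$. *)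

From mathcomp Require Import all_boot all_order all_algebra.
From mathcomp Require Import all_classical all_reals all_analysis.
Set Implicit Arguments. Unset Strict Implicit. Unset Printing Implicit Defensive.
Import Order.TTheory GRing.Theory Num.Theory.
Local Open Scope classical_set_scope.
Local Open Scope ring_scope.

(* Functions are total on R; only their values on [0,1] matter. *)
Definition in01 {R : realType} (x : R) := 0 <= x <= 1.

Definition is_copula {R : realType} (C : R -> R -> R) : Prop :=
  (forall x y, in01 x -> in01 y -> in01 (C x y)) /\
  (forall x, in01 x -> C x 0 = 0 /\ C 0 x = 0 /\ C x 1 = x /\ C 1 x = x) /\
  (forall a b c d, in01 a -> in01 b -> in01 c -> in01 d -> a <= b -> c <= d ->
     0 <= C b d + C a c - C b c - C a d).

Definition is_diagonal_section {R : realType} (delta : R -> R) : Prop :=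
  (forall x, in01 x -> in01 (delta x)) /\
  (forall x, in01 x -> delta x <= x) /\
  (forall x y, in01 x -> in01 y -> x <= y ->
     0 <= delta y - delta x <= 2 * (y - x)) /\
  delta 1 = 1.

Definition delta_hat {R : realType} (delta : R -> R) : R -> R :=
  fun x => x - delta x.

Definition Cbar {R : realType} (delta : R -> R) (x y : R) : R :=
  sup [set C x y | C in [set C : R -> R -> R | is_copula C /\
                          (forall t, in01 t -> C t t = delta t)]].

From mathcomp Require Import all_boot all_order all_algebra.
From mathcomp Require Import all_classical all_reals all_analysis.
From mathcomp Require Import lra ring.
Import Order.TTheory GRing.Theory Num.Theory.
Local Open Scope ring_scope.

(* Upper bound: let C be a copula with diagonal delta, h = id - delta and
   x = t_0 < ... < t_n = y. The volumes of [t_i, t_(i+1)] x [t_(i+1), y],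
   [t_i, t_(i+1)] x [0, t_(i+1)] and [t_i, 1] x [t_i, t_(i+1)] give, by induction on n,
   C(x,y) <= y - (h x + h y + sum_i |h t_(i+1) - h t_i|) / 2; add the Frechet bound
   C(x,y) <= min(x,y) and take the supremum over partitions.
   Attainment: write t = s(t) + P(t) + N(t), where P and N are the positive and negative
   variations of h on [0,t] and s(t) = t - TV_0^t h; all three are nondecreasing since
   h is 1-Lipschitz. The shuffle B(u,v) = min(s u, s v) + min(P u, N v) + min(P v, N u)
   is a copula with diagonal s + 2N = delta. For x <= y, B(x,y) + alpha = x and
   B(x,y) + beta is the variation bound, where alpha and beta are the masses that the
   first two summands put on [0,x] x [y,1] and [x,y]^2. Moving the mass min(alpha, beta)
   from these rectangles to [0,x] x [x,y] and [x,y] x [y,1] keeps the margins and the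
   diagonal and makes the value at (x,y) reach the bound. *)

Section TwoIncreasing.
Context {R : realType}.
Implicit Types (F G : R -> R -> R) (f g : R -> R) (a b c d p q r s u v : R).

Lemma in01_0 : in01 (0 : R). Proof. by rewrite /in01 lexx ler01. Qed.
Lemma in01_1 : in01 (1 : R). Proof. by rewrite /in01 lexx ler01. Qed.

Definition vol F a b c d := F b d - F a d - F b c + F a c.

Definition two_increasing F := forall a b c d, in01 a -> in01 b -> in01 c -> in01 d ->
  a <= b -> c <= d -> 0 <= vol F a b c d.

Definition nondecr01 f := forall u v, in01 u -> in01 v -> u <= v -> f u <= f v.

Lemma vol_same_x F a c d : vol F a a c d = 0.
Proof. by rewrite /vol; ring. Qed.

Lemma vol_same_y F a b c : vol F a b c c = 0.
Proof. by rewrite /vol; ring. Qed.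

Lemma eq_two_increasing F G : (forall u v, in01 u -> in01 v -> F u v = G u v) ->
  two_increasing F -> two_increasing G.
Proof. by move=> eFG hF a b c d ha hb hc hd ab cd; rewrite /vol -!eFG //; apply: hF. Qed.

Lemma two_increasingD F G : two_increasing F -> two_increasing G ->
  two_increasing (fun u v => F u v + G u v).
Proof.
move=> hF hG a b c d ha hb hc hd ab cd.
have := hF a b c d ha hb hc hd ab cd; have := hG a b c d ha hb hc hd ab cd.
by rewrite /vol; lra.
Qed.

Lemma two_increasingZ k F : 0 <= k -> two_increasing F ->
  two_increasing (fun u v => k * F u v).
Proof.
move=> k0 hF a b c d ha hb hc hd ab cd.
have -> : vol (fun u v => k * F u v) a b c d = k * vol F a b c d by rewrite /vol; ring.
exact/mulr_ge0/hF.
Qed.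

Lemma two_increasing_swap {F} : two_increasing F -> two_increasing (fun u v => F v u).
Proof.
move=> hF a b c d ha hb hc hd ab cd.
by have := hF c d a b hc hd ha hb cd ab; rewrite /vol; lra.
Qed.

Lemma two_increasing_mul {f g} : nondecr01 f -> nondecr01 g ->
  two_increasing (fun u v => f u * g v).
Proof.
move=> hf hg a b c d ha hb hc hd ab cd.
have -> : vol (fun u v => f u * g v) a b c d = (f b - f a) * (g d - g c).
  by rewrite /vol; ring.
by apply: mulr_ge0; rewrite subr_ge0; [exact: hf | exact: hg].
Qed.

Lemma two_increasing_min {f g} : nondecr01 f -> nondecr01 g ->
  two_increasing (fun u v => Num.min (f u) (g v)).
Proof.
move=> hf hg a b c d ha hb hc hd ab cd; rewrite /vol.
have := hf a b ha hb ab; have := hg c d hc hd cd.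
move: (f a) (f b) (g c) (g d) => A B C D CD AB.
case: (leP A D) => h1; case: (leP B D) => h2; case: (leP A C) => h3; case: (leP B C) => h4;
rewrite ?(min_l h1) ?(min_r (ltW h1)) ?(min_l h2) ?(min_r (ltW h2))
  ?(min_l h3) ?(min_r (ltW h3)) ?(min_l h4) ?(min_r (ltW h4)); lra.
Qed.

Lemma nondecr_margin_l {G} : two_increasing G -> (forall u, G u 0 = 0) ->
  nondecr01 (fun u => G u 1).
Proof.
move=> hG G0 u v hu hv uv.
by have := hG u v 0 1 hu hv in01_0 in01_1 uv ler01; rewrite /vol !G0; lra.
Qed.

Lemma nondecr_margin_r {G} : two_increasing G -> (forall v, G 0 v = 0) ->
  nondecr01 (fun v => G 1 v).
Proof.
move=> hG G0 u v hu hv uv.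
by have := hG 0 1 u v in01_0 in01_1 hu hv ler01 uv; rewrite /vol !G0; lra.
Qed.

Lemma two_increasing_copula C : two_increasing C ->
  (forall u, in01 u -> C u 0 = 0 /\ C 0 u = 0 /\ C u 1 = u /\ C 1 u = u) ->
  is_copula C.
Proof.
move=> hC hb; split; last split => //.
- move=> u v hu hv; have /andP[u0 u1] := hu; have /andP[v0 v1] := hv.
  have [C_u0 [C_0u [C_u1 C_1u]]] := hb u hu; have [C_v0 [C_0v [C_v1 C_1v]]] := hb v hv.
  have [C_00 _] := hb 0 in01_0; have [_ [C_01 _]] := hb 1 in01_1.
  have := hC 0 u 0 v in01_0 hu in01_0 hv u0 v0.
  have := hC 0 u v 1 in01_0 hu hv in01_1 u0 v1.
  by rewrite /vol => H1 H2; apply/andP; split; lra.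
- move=> a b c d ha hb' hc hd ab cd.
  by have := hC a b c d ha hb' hc hd ab cd; rewrite /vol; lra.
Qed.

Lemma is_copula_swap C : is_copula C -> is_copula (fun u v => C v u).
Proof.
move=> [C_in01 [C_margins C_vol]]; split; [|split].
- by move=> u v hu hv; apply: C_in01.
- by move=> u hu; have [? [? [? ?]]] := C_margins u hu.
- move=> a b c d ha hb hc hd ab cd.
  by have := C_vol c d a b hc hd ha hb cd ab; lra.
Qed.

Definition clamp p q u := Num.max p (Num.min u q).

Lemma clamp_bounds {p q} u : p <= q -> p <= clamp p q u <= q.
Proof.
move=> pq; rewrite /clamp.
case: (leP u q) => h1; rewrite ?(min_l h1) ?(min_r (ltW h1));
case: (leP p u) => h2; rewrite ?(max_r h2) ?(max_l (ltW h2)) ?(max_r pq) ?(max_l pq);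
by apply/andP; split; lra.
Qed.

Lemma clamp_in01 {p q} u : in01 p -> in01 q -> p <= q -> in01 (clamp p q u).
Proof.
move=> /andP[p0 p1] /andP[q0 q1] pq; have /andP[h1 h2] := clamp_bounds u pq.
by apply/andP; split; lra.
Qed.

Lemma le_clamp {p q u v} : p <= q -> u <= v -> clamp p q u <= clamp p q v.
Proof.
move=> pq uv; rewrite /clamp.
case: (leP u q) => h1; rewrite ?(min_l h1) ?(min_r (ltW h1));
case: (leP v q) => h3; rewrite ?(min_l h3) ?(min_r (ltW h3));
case: (leP p u) => h2; rewrite ?(max_r h2) ?(max_l (ltW h2)) ?(max_r pq) ?(max_l pq);
case: (leP p v) => h4; rewrite ?(max_r h4) ?(max_l (ltW h4)) ?(max_r pq) ?(max_l pq); lra.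
Qed.

Lemma clamp_id {p q u} : p <= u -> u <= q -> clamp p q u = u.
Proof. by move=> pu uq; rewrite /clamp (min_l uq) (max_r pu). Qed.

Lemma clamp_left {p q u} : p <= q -> u <= p -> clamp p q u = p.
Proof. by move=> pq up; rewrite /clamp (min_l (le_trans up pq)) max_l. Qed.

Lemma clamp_right {p q u} : p <= q -> q <= u -> clamp p q u = q.
Proof. by move=> pq qu; rewrite /clamp (min_r qu) (max_r pq). Qed.

Lemma clamp_subsegment {p q a b} : p <= q -> a <= b ->
  exists a' b', [/\ a <= a', a' <= b', b' <= b &
    (a' = clamp p q a /\ b' = clamp p q b) \/ (a' = b' /\ clamp p q a = clamp p q b)].
Proof.
move=> pq ab.
case: (leP b p) => bp.
  by exists b, b; split => //; right; rewrite !clamp_left // (le_trans ab).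
case: (leP q a) => qa.
  by exists a, a; split => //; right; rewrite !clamp_right // (le_trans qa).
case: (leP a p) => ap; case: (leP b q) => bq.
- by exists p, b; split; try lra; left; rewrite clamp_left // clamp_id //; lra.
- by exists p, q; split; try lra; left; rewrite clamp_left // clamp_right //; lra.
- by exists a, b; split; try lra; left; rewrite !clamp_id //; lra.
- by exists a, q; split; try lra; left; rewrite clamp_id // ?clamp_right //; lra.
Qed.

(* The distribution function of the [F]-mass of the rectangle [p,q] x [r,s]. *)
Definition rect_restrict F p q r s u v := vol F p (clamp p q u) r (clamp r s v).

Lemma vol_rect_restrict F p q r s a b c d :
  vol (rect_restrict F p q r s) a b c d =
  vol F (clamp p q a) (clamp p q b) (clamp r s c) (clamp r s d).
Proof. by rewrite /vol /rect_restrict /vol; ring. Qed.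

Lemma two_increasing_rect_restrict {F p q r s} :
  in01 p -> in01 q -> in01 r -> in01 s -> p <= q -> r <= s ->
  two_increasing F -> two_increasing (rect_restrict F p q r s).
Proof.
move=> hp hq hr hs pq rs hF a b c d ha hb hc hd ab cd.
by rewrite vol_rect_restrict; apply: hF; (apply: clamp_in01 || apply: le_clamp).
Qed.

Lemma two_increasing_sub_rect_restrict {F p q r s} :
  in01 p -> in01 q -> in01 r -> in01 s -> p <= q -> r <= s ->
  two_increasing F -> two_increasing (fun u v => F u v - rect_restrict F p q r s u v).
Proof.
move=> hp hq hr hs pq rs hF a b c d ha hb hc hd ab cd.
have -> : vol (fun u v => F u v - rect_restrict F p q r s u v) a b c d =
   vol F a b c d - vol (rect_restrict F p q r s) a b c d by rewrite /vol; ring.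
rewrite vol_rect_restrict subr_ge0.
have [a' [b' [aa' a'b' b'b ea]]] := clamp_subsegment pq ab.
have [c' [d' [cc' c'd' d'd ec]]] := clamp_subsegment rs cd.
have in01_between (t t' t'' : R) : in01 t -> in01 t'' -> t <= t' -> t' <= t'' -> in01 t'.
  by move=> /andP[? ?] /andP[? ?] ? ?; apply/andP; split; lra.
have ha' := in01_between _ _ _ ha hb aa' (le_trans a'b' b'b).
have hb' := in01_between _ _ _ ha hb (le_trans aa' a'b') b'b.
have hc' := in01_between _ _ _ hc hd cc' (le_trans c'd' d'd).
have hd' := in01_between _ _ _ hc hd (le_trans cc' c'd') d'd.
have -> : vol F (clamp p q a) (clamp p q b) (clamp r s c) (clamp r s d) = vol F a' b' c' d'.
  case: ea => [[-> ->]|[-> ->]]; case: ec => [[-> ->]|[-> ->]] //;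
  by rewrite ?vol_same_x ?vol_same_y.
(* Cut [a,b] x [c,d] into [a',b'] x [c',d'] and four rectangles around it. *)
have -> : vol F a b c d = vol F a a' c d + vol F b' b c d + vol F a' b' c c'
   + vol F a' b' d' d + vol F a' b' c' d' by rewrite /vol; ring.
have := hF a a' c d ha ha' hc hd aa' cd; have := hF b' b c d hb' hb hc hd b'b cd.
have := hF a' b' c c' ha' hb' hc hc' a'b' cc'.
have := hF a' b' d' d ha' hb' hd' hd a'b' d'd.
lra.
Qed.

End TwoIncreasing.

Lemma variation_cons {R : realType} a b (f : R -> R) t s :
  variation a b f (t :: s) = `|f t - f a| + variation t b f s.
Proof. by rewrite /variation /= big_nat_recl. Qed.

Lemma sup_eq_max {R : realType} (E : set R) m : E m -> ubound E m -> sup E = m.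
Proof.
move=> Em mE; apply/eqP; rewrite eq_le ge_sup //=; last by exists m.
by apply: ub_le_sup => //; exists m.
Qed.

Section DiagonalSection.
Context {R : realType} (delta : R -> R) (Hd : is_diagonal_section delta).
Local Notation h := (delta_hat delta).

Lemma delta_hat_lipschitz a b : in01 a -> in01 b -> a <= b -> `|h b - h a| <= b - a.
Proof.
case: Hd => _ [_ [Hd2 _]] ha hb ab; have /andP[? ?] := Hd2 a b ha hb ab.
by rewrite /delta_hat ler_norml; apply/andP; split; lra.
Qed.

Lemma delta_hat_ge0 t : in01 t -> 0 <= h t.
Proof. by case: Hd => _ [Hd1 _] ht; have := Hd1 t ht; rewrite /delta_hat; lra. Qed.

Lemma delta_hat0 : h 0 = 0.
Proof.
case: Hd => Hd0 [Hd1 _]; have := Hd1 0 in01_0; have /andP[? _] := Hd0 0 in01_0.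
by rewrite /delta_hat; lra.
Qed.

Lemma delta_hat1 : h 1 = 0.
Proof. by case: Hd => _ [_ [_ d1]]; rewrite /delta_hat d1 subrr. Qed.

Lemma variation_delta_hat_le a b s : 0 <= a -> b <= 1 -> itv_partition a b s ->
  variation a b h s <= b - a.
Proof.
elim: s a => [|t s IH] a a0 b1 abs.
  by rewrite variation_nil (itv_partition_nil abs) subrr.
have tbs := itv_partition_cons abs.
have at' : a < t by case: abs => /= /andP[].
have tb := itv_partition_le tbs.
have ha : in01 a by apply/andP; split; lra.
have ht : in01 t by apply/andP; split; lra.
have := IH t (ltW (le_lt_trans a0 at')) b1 tbs.
have := delta_hat_lipschitz a t ha ht (ltW at').
by rewrite variation_cons; lra.
Qed.

Lemma total_variation_delta_hat_le a b : 0 <= a -> b <= 1 ->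
  (total_variation a b h <= (b - a)%:E)%E.
Proof.
move=> a0 b1; apply: ge_ereal_sup => _ [_ [s abs <-] <-].
by rewrite lee_fin; apply: variation_delta_hat_le.
Qed.

Definition tv a b := fine (total_variation a b h).

Lemma tvE a b : 0 <= a -> a <= b -> b <= 1 -> (tv a b)%:E = total_variation a b h.
Proof.
move=> a0 ab b1; rewrite /tv fineK // ge0_fin_numE ?total_variation_ge0 //.
exact: le_lt_trans (total_variation_delta_hat_le a b a0 b1) (ltry _).
Qed.

Lemma tv_ge a b : 0 <= a -> a <= b -> b <= 1 -> `|h b - h a| <= tv a b.
Proof. by move=> a0 ab b1; rewrite -lee_fin tvE //; exact: total_variation_ge. Qed.

Lemma tv_le a b : 0 <= a -> a <= b -> b <= 1 -> tv a b <= b - a.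
Proof.
by move=> a0 ab b1; rewrite -lee_fin tvE //; exact: total_variation_delta_hat_le.
Qed.

Lemma tvD a c b : 0 <= a -> a <= c -> c <= b -> b <= 1 -> tv a b = tv a c + tv c b.
Proof.
move=> a0 ac cb b1; apply/eqP; rewrite -eqe EFinD.
rewrite !tvE //; try lra.
exact/eqP/total_variationD.
Qed.

Lemma tvxx a : tv a a = 0.
Proof. by rewrite /tv total_variationxx. Qed.

(* [posvar] and [negvar] are the positive and negative variations of [h] on [0, t]. *)
Definition posvar t := (tv 0 t + h t) / 2.
Definition negvar t := (tv 0 t - h t) / 2.
Definition slack t := t - tv 0 t.

Lemma tv_increment u v : in01 u -> in01 v -> u <= v ->
  [/\ tv 0 v = tv 0 u + tv u v, `|h v - h u| <= tv u v & tv u v <= v - u].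
Proof.
move=> /andP[u0 u1] /andP[v0 v1] uv.
by split; [apply: tvD | exact: tv_ge | exact: tv_le].
Qed.

Lemma nondecr_posvar : nondecr01 posvar.
Proof.
move=> u v hu hv uv; rewrite /posvar; have [-> + _] := tv_increment u v hu hv uv.
by rewrite ler_norml => /andP[? ?]; lra.
Qed.

Lemma nondecr_negvar : nondecr01 negvar.
Proof.
move=> u v hu hv uv; rewrite /negvar; have [-> + _] := tv_increment u v hu hv uv.
by rewrite ler_norml => /andP[? ?]; lra.
Qed.

Lemma nondecr_slack : nondecr01 slack.
Proof.
move=> u v hu hv uv; rewrite /slack.
by have [-> _ ?] := tv_increment u v hu hv uv; lra.
Qed.

Lemma negvar_le_posvar u : in01 u -> negvar u <= posvar u.
Proof. by move=> hu; have := delta_hat_ge0 u hu; rewrite /negvar /posvar; lra. Qed.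

Lemma posvar1 : posvar 1 = negvar 1.
Proof. by rewrite /posvar /negvar delta_hat1 subr0 addr0. Qed.

Lemma posvar0 : posvar 0 = 0.
Proof. by rewrite /posvar delta_hat0 tvxx addr0 mul0r. Qed.

Lemma negvar0 : negvar 0 = 0.
Proof. by rewrite /negvar delta_hat0 tvxx subr0 mul0r. Qed.

Lemma slack0 : slack 0 = 0.
Proof. by rewrite /slack tvxx subr0. Qed.

Lemma slack_posvar_negvar u : slack u + posvar u + negvar u = u.
Proof. by rewrite /slack /posvar /negvar; lra. Qed.

Lemma posvar_sub_negvar u : posvar u - negvar u = h u.
Proof. by rewrite /posvar /negvar; lra. Qed.

Definition Mup u v := Num.min (slack u) (slack v) + Num.min (posvar u) (negvar v).
Definition Mlow u v := Num.min (posvar v) (negvar u).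
Definition Cbase u v := Mup u v + Mlow u v.

Lemma two_increasing_Mup : two_increasing Mup.
Proof.
exact: two_increasingD (two_increasing_min nondecr_slack nondecr_slack)
  (two_increasing_min nondecr_posvar nondecr_negvar).
Qed.

Lemma two_increasing_Mlow : two_increasing Mlow.
Proof.
exact: two_increasing_swap (two_increasing_min nondecr_posvar nondecr_negvar).
Qed.

Lemma Mup_ge {u v} : in01 u -> in01 v -> v <= u -> Mup u v = slack v + negvar v.
Proof.
move=> hu hv vu; rewrite /Mup (min_r (nondecr_slack _ _ hv hu vu)) min_r //.
exact: le_trans (negvar_le_posvar v hv) (nondecr_posvar _ _ hv hu vu).
Qed.

Lemma Mup_u1 u : in01 u -> Mup u 1 = slack u + posvar u.
Proof.
move=> hu; have /andP[_ u1] := hu.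
rewrite /Mup (min_l (nondecr_slack _ _ hu in01_1 u1)) min_l // -posvar1.
exact: nondecr_posvar _ _ hu in01_1 u1.
Qed.

Lemma Mup_1v v : in01 v -> Mup 1 v = slack v + negvar v.
Proof. by move=> hv; have /andP[_ v1] := hv; exact: Mup_ge in01_1 hv v1. Qed.

Lemma Mup_u0 u : in01 u -> Mup u 0 = 0.
Proof.
by move=> hu; have /andP[u0 _] := hu; rewrite (Mup_ge hu in01_0 u0) slack0 negvar0 addr0.
Qed.

Lemma Mup_0v v : in01 v -> Mup 0 v = 0.
Proof.
move=> hv; have /andP[v0 _] := hv.
rewrite /Mup (min_l (nondecr_slack _ _ in01_0 hv v0)) slack0 posvar0 min_l ?addr0 //.
by rewrite -negvar0; exact: nondecr_negvar _ _ in01_0 hv v0.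
Qed.

Lemma Mlow_le {u v} : in01 u -> in01 v -> u <= v -> Mlow u v = negvar u.
Proof.
move=> hu hv uv; rewrite /Mlow min_r //.
exact: le_trans (negvar_le_posvar u hu) (nondecr_posvar _ _ hu hv uv).
Qed.

Lemma Mlow_1v v : in01 v -> Mlow 1 v = posvar v.
Proof.
move=> hv; have /andP[_ v1] := hv; rewrite /Mlow min_l // -posvar1.
exact: nondecr_posvar _ _ hv in01_1 v1.
Qed.

Lemma Mlow_u0 u : in01 u -> Mlow u 0 = 0.
Proof.
move=> hu; have /andP[u0 _] := hu; rewrite /Mlow posvar0 min_l //.
by rewrite -negvar0; exact: nondecr_negvar _ _ in01_0 hu u0.
Qed.

Lemma Mlow_0v v : in01 v -> Mlow 0 v = 0.
Proof. by move=> hv; have /andP[v0 _] := hv; rewrite (Mlow_le in01_0 hv v0) negvar0. Qed.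

Lemma Cbase_margins u : in01 u ->
  Cbase u 0 = 0 /\ Cbase 0 u = 0 /\ Cbase u 1 = u /\ Cbase 1 u = u.
Proof.
move=> hu; have /andP[_ u1] := hu; rewrite /Cbase; split; [|split; [|split]].
- by rewrite Mup_u0 // Mlow_u0 // addr0.
- by rewrite Mup_0v // Mlow_0v // addr0.
- by rewrite Mup_u1 // (Mlow_le hu in01_1 u1) slack_posvar_negvar.
- by rewrite Mup_1v // Mlow_1v // -addrA (addrC (negvar u)) addrA slack_posvar_negvar.
Qed.

Lemma Cbase_copula : is_copula Cbase.
Proof.
apply: two_increasing_copula; last exact: Cbase_margins.
exact: two_increasingD two_increasing_Mup two_increasing_Mlow.
Qed.

Lemma Cbase_diag t : in01 t -> Cbase t t = delta t.
Proof.
move=> ht; rewrite /Cbase (Mup_ge ht ht (lexx t)) (Mlow_le ht ht (lexx t)).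
by have := slack_posvar_negvar t; have := posvar_sub_negvar t; rewrite /delta_hat; lra.
Qed.

Section MassTransfer.
Variables (x y : R).
Hypotheses (hx : in01 x) (hy : in01 y) (xy : x <= y).

Let x0 : 0 <= x. Proof. by case/andP: hx. Qed.
Let x1 : x <= 1. Proof. by case/andP: hx. Qed.
Let y0 : 0 <= y. Proof. by case/andP: hy. Qed.
Let y1 : y <= 1. Proof. by case/andP: hy. Qed.

Definition Aoff := rect_restrict Mup 0 x y 1.
Definition Amid := rect_restrict Mup x y x y.
Definition alpha := vol Mup 0 x y 1.
Definition beta := vol Mup x y x y.
Definition gamma := Num.min alpha beta.

(* The added products of marginals of [Aoff] and [Amid] live on [0,x] x [x,y] and
   [x,y] x [y,1], away from the diagonal. *)
Definition Cmove u v := Cbase u v - gamma / alpha * Aoff u v - gamma / beta * Amid u v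
  + gamma / (alpha * beta) * (Aoff u 1 * Amid 1 v + Amid u 1 * Aoff 1 v).

Lemma alpha_ge0 : 0 <= alpha.
Proof. exact: two_increasing_Mup 0 x y 1 in01_0 hx hy in01_1 x0 y1. Qed.

Lemma beta_ge0 : 0 <= beta.
Proof. exact: two_increasing_Mup x y x y hx hy hx hy xy xy. Qed.

Lemma two_increasing_Aoff : two_increasing Aoff.
Proof.
exact: two_increasing_rect_restrict in01_0 hx hy in01_1 x0 y1 two_increasing_Mup.
Qed.

Lemma two_increasing_Amid : two_increasing Amid.
Proof. exact: two_increasing_rect_restrict hx hy hx hy xy xy two_increasing_Mup. Qed.

Lemma Aoff_small_v u v : v <= y -> Aoff u v = 0.
Proof. by move=> vy; rewrite /Aoff /rect_restrict (clamp_left y1 vy) vol_same_y. Qed.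

Lemma Aoff_0v v : Aoff 0 v = 0.
Proof. by rewrite /Aoff /rect_restrict (clamp_left x0 (lexx _)) vol_same_x. Qed.

Lemma Aoff_large_u u v : x <= u -> Aoff u v = Aoff 1 v.
Proof.
by move=> xu; rewrite /Aoff /rect_restrict (clamp_right x0 xu) (clamp_right x0 x1).
Qed.

Lemma Aoff_large_u1 u : x <= u -> Aoff u 1 = alpha.
Proof.
by move=> xu; rewrite /Aoff /rect_restrict (clamp_right x0 xu) (clamp_right y1 (lexx _)).
Qed.

Lemma Amid_small_v u v : v <= x -> Amid u v = 0.
Proof. by move=> vx; rewrite /Amid /rect_restrict (clamp_left xy vx) vol_same_y. Qed.

Lemma Amid_small_u u v : u <= x -> Amid u v = 0.
Proof. by move=> ux; rewrite /Amid /rect_restrict (clamp_left xy ux) vol_same_x. Qed.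

Lemma Amid_large_u u v : y <= u -> Amid u v = Amid 1 v.
Proof.
by move=> yu; rewrite /Amid /rect_restrict (clamp_right xy yu) (clamp_right xy y1).
Qed.

Lemma Amid_large_v u v : y <= v -> Amid u v = Amid u 1.
Proof.
by move=> yv; rewrite /Amid /rect_restrict (clamp_right xy yv) (clamp_right xy y1).
Qed.

Lemma Amid11 : Amid 1 1 = beta.
Proof. by rewrite /Amid /rect_restrict (clamp_right xy y1). Qed.

(* [Mup] puts no mass strictly below the diagonal. *)
Lemma Amid_diag t : x <= t -> t <= y -> Amid t t = Amid 1 t.
Proof.
move=> xt ty; rewrite /Amid /rect_restrict (clamp_id xt ty) (clamp_right xy y1) /vol.
have ht : in01 t by apply/andP; split; [exact: le_trans x0 xt | exact: le_trans ty y1].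
rewrite (Mup_ge ht ht (lexx t)) (Mup_ge hy ht ty) (Mup_ge hy hx xy).
by rewrite (Mup_ge ht hx xt); lra.
Qed.

Lemma two_increasing_Mup_sub : two_increasing (fun u v => Mup u v - Aoff u v - Amid u v).
Proof.
have Moff := two_increasing_sub_rect_restrict in01_0 hx hy in01_1 x0 y1 two_increasing_Mup.
have := two_increasing_sub_rect_restrict hx hy hx hy xy xy Moff.
apply: eq_two_increasing => u v _ _ /=.
(* The two rectangles overlap in a segment only, so [Aoff] has no mass in [x,y]^2. *)
have Aoff_mid : rect_restrict Aoff x y x y u v = 0.
  rewrite /rect_restrict vol_rect_restrict.
  have cx w : clamp 0 x (clamp x y w) = x.
    by apply: clamp_right x0 _; case/andP: (clamp_bounds w xy).
  by rewrite !cx (clamp_right x0 (lexx x)) vol_same_x.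
have -> : rect_restrict (fun u v => Mup u v - Aoff u v) x y x y u v =
    Amid u v - rect_restrict Aoff x y x y u v by rewrite /Amid /rect_restrict /vol; ring.
by rewrite Aoff_mid subr0.
Qed.

Lemma Cbase_add_alpha : Cbase x y + alpha = x.
Proof.
rewrite /Cbase /alpha /vol (Mup_u1 _ hx) (Mup_0v _ in01_1) (Mup_0v _ hy) (Mlow_le hx hy xy).
by have := slack_posvar_negvar x; lra.
Qed.

Lemma Cbase_add_beta : Cbase x y + beta = y - 2^-1 * (h x + h y + tv x y).
Proof.
rewrite /Cbase /beta /vol (Mup_ge hy hy (lexx y)) (Mup_ge hy hx xy).
rewrite (Mup_ge hx hx (lexx x)) (Mlow_le hx hy xy).
have [tv0y _ _] := tv_increment x y hx hy xy.
by rewrite /slack /negvar tv0y; lra.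
Qed.

Section Positive.
Hypotheses (alpha_gt0 : 0 < alpha) (beta_gt0 : 0 < beta).

Lemma Cmove_xy : Cmove x y = Cbase x y + gamma.
Proof.
rewrite /Cmove (Aoff_small_v _ _ (lexx y)) (Amid_small_u _ _ (lexx x)).
rewrite (Amid_small_u _ 1 (lexx x)) (Aoff_large_u1 _ (lexx x)).
rewrite /Amid /rect_restrict (clamp_right xy y1) (clamp_id xy (lexx y)) -/beta.
by field; rewrite !gt_eqF.
Qed.

Lemma two_increasing_Cmove : two_increasing Cmove.
Proof.
have gamma_ge0 : 0 <= gamma by rewrite le_min !ltW.
have coef_ge0 k : 0 < k -> gamma <= k -> 0 <= (k - gamma) / k.
  by move=> k_gt0 gk; rewrite divr_ge0 ?subr_ge0 // ltW.
apply: (eq_two_increasing (fun u v => (Mlow u v + (Mup u v - Aoff u v - Amid u v))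
   + ((alpha - gamma) / alpha * Aoff u v + (beta - gamma) / beta * Amid u v)
   + gamma / (alpha * beta) * (Aoff u 1 * Amid 1 v + Amid u 1 * Aoff 1 v))).
  by move=> u v _ _; rewrite /Cmove /Cbase; field; rewrite !gt_eqF.
apply: two_increasingD; [apply: two_increasingD|].
- exact: two_increasingD two_increasing_Mlow two_increasing_Mup_sub.
- by apply: two_increasingD; apply: two_increasingZ;
    rewrite ?coef_ge0 ?ge_min ?lexx ?orbT //;
    [exact: two_increasing_Aoff | exact: two_increasing_Amid].
- apply: two_increasingZ; first by rewrite divr_ge0 // mulr_ge0 // ltW.
  apply: two_increasingD; apply: two_increasing_mul.
  + exact: nondecr_margin_l two_increasing_Aoff (fun u => Aoff_small_v u 0 y0).
  + exact: nondecr_margin_r two_increasing_Amid (fun v => Amid_small_u 0 v x0).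
  + exact: nondecr_margin_l two_increasing_Amid (fun u => Amid_small_v u 0 x0).
  + exact: nondecr_margin_r two_increasing_Aoff Aoff_0v.
Qed.

Lemma Cmove_margins u : in01 u ->
  Cmove u 0 = 0 /\ Cmove 0 u = 0 /\ Cmove u 1 = u /\ Cmove 1 u = u.
Proof.
move=> hu; have [C_u0 [C_0u [C_u1 C_1u]]] := Cbase_margins u hu.
have Aoff_u0 w : Aoff w 0 = 0 := Aoff_small_v w 0 y0.
have Amid_u0 w : Amid w 0 = 0 := Amid_small_v w 0 x0.
have Amid_0v w : Amid 0 w = 0 := Amid_small_u 0 w x0.
rewrite /Cmove C_u0 C_0u C_u1 C_1u !Aoff_u0 !Amid_u0 !Aoff_0v !Amid_0v.
rewrite (Aoff_large_u1 1 x1) Amid11.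
by split; [|split; [|split]]; field; rewrite !gt_eqF.
Qed.

Lemma Cmove_copula : is_copula Cmove.
Proof. exact: two_increasing_copula two_increasing_Cmove Cmove_margins. Qed.

Lemma Cmove_diag t : in01 t -> Cmove t t = delta t.
Proof.
move=> ht; rewrite /Cmove Cbase_diag //.
case: (leP t x) => tx.
  rewrite !(Aoff_small_v _ _ (le_trans tx xy)) !(Amid_small_u _ _ tx).
  by rewrite (Amid_small_v _ _ tx); ring.
case: (leP t y) => ty.
  rewrite !(Aoff_small_v _ _ ty) (Amid_diag _ (ltW tx) ty) (Aoff_large_u1 _ (ltW tx)).
  by field; rewrite !gt_eqF.
have yt := ltW ty; have xt := le_trans xy yt.
rewrite (Aoff_large_u _ _ xt) (Aoff_large_u1 _ xt).
rewrite (Amid_large_u _ _ yt) (Amid_large_v _ _ yt) (Amid_large_u _ 1 yt) Amid11.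
by field; rewrite !gt_eqF.
Qed.

End Positive.

End MassTransfer.

Definition diag_bound x y := Num.min x (Num.min y (y - 2^-1 * (h x + h y + tv x y))).

Lemma Cbase_add_gamma x y : in01 x -> in01 y -> x <= y ->
  Cbase x y + gamma x y = diag_bound x y.
Proof.
move=> hx hy xy; rewrite /diag_bound /gamma addr_minr Cbase_add_alpha // Cbase_add_beta //.
have [_ tv_ge _] := tv_increment x y hx hy xy.
have := delta_hat_ge0 x hx; have := delta_hat_ge0 y hy; have := normr_ge0 (h y - h x).
by move=> *; rewrite [Num.min y _]min_r //; lra.
Qed.

Lemma diag_bound_attained x y : in01 x -> in01 y -> x <= y ->
  exists2 C, is_copula C /\ (forall t, in01 t -> C t t = delta t) & C x y = diag_bound x y.
Proof.
move=> hx hy xy; rewrite -Cbase_add_gamma //.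
have Cbase_ok : is_copula Cbase /\ (forall t, in01 t -> Cbase t t = delta t).
  by split; [exact: Cbase_copula | exact: Cbase_diag].
have [a_gt0|a_le0] := ltP 0 (alpha x y); last first.
  exists Cbase => //; rewrite /gamma (_ : alpha x y = 0) ?min_l ?addr0 ?beta_ge0 //.
  by apply/eqP; rewrite eq_le a_le0 alpha_ge0.
have [b_gt0|b_le0] := ltP 0 (beta x y); last first.
  exists Cbase => //; rewrite /gamma (_ : beta x y = 0) ?min_r ?addr0 ?alpha_ge0 //.
  by apply/eqP; rewrite eq_le b_le0 beta_ge0.
exists (Cmove x y); last exact: Cmove_xy.
by split; [exact: Cmove_copula | exact: Cmove_diag].
Qed.

Section UpperBound.
Variable C : R -> R -> R.
Hypotheses (hC : is_copula C) (C_diag : forall t, in01 t -> C t t = delta t).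

Lemma copula_diag_step a t b : in01 a -> in01 t -> in01 b -> a <= t -> t <= b ->
  C a b <= C t b /\ C a b + (h a - h t) <= C t b.
Proof.
move=> ha ht hb at' tb; have [_ [C_margins C_vol]] := hC.
have [C_t0 _] := C_margins t ht; have [C_a0 _] := C_margins a ha.
have [_ [_ [_ C_1t]]] := C_margins t ht; have [_ [_ [_ C_1a]]] := C_margins a ha.
have := C_vol a t t b ha ht ht hb at' tb.
have := C_vol a t 0 t ha ht in01_0 ht at' (le_trans (andP ha).1 at').
have := C_vol a 1 a t ha in01_1 ha ht (andP ha).2 at'.
rewrite !C_diag // C_t0 C_a0 C_1t C_1a /delta_hat => *.
by split; lra.
Qed.

Lemma copula_le_variation b s a : in01 a -> in01 b -> itv_partition a b s ->
  C a b <= b - 2^-1 * (h a + h b + variation a b h s).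
Proof.
move=> + hb; elim: s a => [|t s IH] a ha abs.
  by rewrite variation_nil -(itv_partition_nil abs) C_diag // /delta_hat; lra.
have tbs := itv_partition_cons abs.
have at' : a < t by case: abs => /= /andP[].
have tb := itv_partition_le tbs.
have ht : in01 t.
  by apply/andP; split; [exact: le_trans (andP ha).1 (ltW at') | exact: le_trans tb (andP hb).2].
have := IH t ht tbs; have [Cab_le Cab_leD] := copula_diag_step a t b ha ht hb (ltW at') tb.
by rewrite variation_cons; case: (leP 0 (h t - h a)) => c;
  [rewrite ger0_norm | rewrite ltr0_norm]; lra.
Qed.

Lemma copula_le_diag_bound x y : in01 x -> in01 y -> x <= y -> C x y <= diag_bound x y.
Proof.
move=> hx hy xy; have /andP[x0 x1] := hx; have /andP[y0 y1] := hy.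
have [_ [C_margins C_vol]] := hC.
have [C_x0 [C_0x [C_x1 C_1x]]] := C_margins x hx.
have [C_y0 [C_0y [C_y1 C_1y]]] := C_margins y hy.
have [_ [C_01 _]] := C_margins 1 in01_1; have [C_00 _] := C_margins 0 in01_0.
have := C_vol 0 x y 1 in01_0 hx hy in01_1 x0 y1.
have := C_vol x 1 0 y hx in01_1 in01_0 hy x1 y0.
have tv_le : tv x y <= 2 * (y - C x y) - h x - h y.
  rewrite -lee_fin tvE //; apply: ge_ereal_sup => _ [_ [s xys <-] <-].
  by rewrite lee_fin; have := copula_le_variation y s x hx hy xys; lra.
by rewrite /vol /diag_bound !le_min => *; apply/andP; split; [|apply/andP; split]; lra.
Qed.

End UpperBound.

Lemma Cbar_diag_bound x y : in01 x -> in01 y -> x <= y -> Cbar delta x y = diag_bound x y.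
Proof.
move=> hx hy xy; have [C C_ok Cxy] := diag_bound_attained x y hx hy xy.
apply: sup_eq_max; first by exists C.
by move=> _ [C' [C'_copula C'_diag] <-]; exact: copula_le_diag_bound.
Qed.

End DiagonalSection.

Lemma CbarC {R : realType} (delta : R -> R) x y : Cbar delta x y = Cbar delta y x.
Proof.
have transpose (C : R -> R -> R) :
    is_copula C /\ (forall t, in01 t -> C t t = delta t) ->
    is_copula (fun u v => C v u) /\ (forall t, in01 t -> C t t = delta t).
  by move=> [C_copula C_diag]; split; [exact: is_copula_swap|].
rewrite /Cbar; congr sup; apply/seteqP; split => _ [C hC <-].
- by exists (fun u v => C v u); [exact: transpose|].
- by exists (fun u v => C v u); [exact: transpose|].
Qed.

Theorem theorem3p6 (R : realType) (delta : R -> R) (x y : R) :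
  is_diagonal_section delta -> in01 x -> in01 y ->
  Cbar delta x y =
  Num.min x (Num.min y
    (Num.max x y - 2^-1 * (delta_hat delta x + delta_hat delta y +
       fine (total_variation (Num.min x y) (Num.max x y) (delta_hat delta))))).
Proof.
move=> Hd hx hy; have [xy|yx] := leP x y.
- exact: Cbar_diag_bound.
- rewrite CbarC (Cbar_diag_bound _ Hd y x hy hx (ltW yx)).
  by rewrite /diag_bound (addrC (delta_hat delta y)) minA (minC y x) -minA.
Qed.
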